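(* Let $\mathbf p,\mathbf q_1,\mathbf q_2,\mathbf r$ be words, $x$ a letter, and $\mathbf w=\mathbf px\mathbf q_1\mathbf q_2x\mathbf r$. If every letter occurring in $\mathbf q_1\mathbf q_2$ occurs at least twice in $\mathbf w$, then $\mathbf D_{15}$ satisfies the identity $\mathbf w\approx\mathbf px\mathbf q_1x\mathbf q_2x\mathbf r$.
   Context: Words are elements of the free monoid over a countably infinite alphabet; distinct symbols below are distinct letters. $\prod$ denotes concatenation in increasing index order; $\operatorname{var}\Sigma$ is the monoid variety defined by identities $\Sigma$. $S_N$ is the symmetric group on $\{1,\dots,N\}$, $i\tau$ the image of $i$. For $n,m,k\in\mathbb N$, $\tau\in S_{n+m+k}$: $\mathbf c_{n,m,k}[\tau]=\bigl(\prod_{i=1}^n z_it_i\bigr)xyt\bigl(\prod_{i=n+1}^{n+m} z_it_i\bigr)x\bigl(\prod_{i=1}^{n+m+k-1} z_{i\tau}y_i^2\bigr)z_{(n+m+k)\tau}y\bigl(\prod_{i=n+m+1}^{n+m+k} t_iz_i\bigr)$; $\mathbf c'_{n,m,k}[\tau]$ is obtained by swapping the first occurrences of $x$ and $y$; $\mathbf d_{n,m,k}[\tau]$, $\mathbf d'_{n,m,k}[\tau]$ are $\mathbf c_{n,m,k}[\tau]$, $\mathbf c'_{n,m,k}[\tau]$ read right to left. $\Phi_1$ is the set of all identities $\mathbf c_{n,m,k}[\tau]\approx\mathbf c'_{n,m,k}[\tau]$, $\mathbf d_{n,m,k}[\tau]\approx\mathbf d'_{n,m,k}[\tau]$. $\mathbf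 D_{15}=\operatorname{var}\{\Phi_1,\ xyx\approx x^2yx,\ xyx\approx xyx^2,\ (xy)^2\approx(yx)^2\}$. *)

From mathcomp Require Import all_boot all_fingroup.
Set Implicit Arguments. Unset Strict Implicit. Unset Printing Implicit Defensive.

Definition word := seq nat.

Record monoid := Monoid {
  mcar :> Type;
  mop : mcar -> mcar -> mcar;
  munit : mcar;
  mopA : forall a b c, mop a (mop b c) = mop (mop a b) c;
  mop1l : forall a, mop munit a = a;
  mop1r : forall a, mop a munit = a }.

Definition weval (M : monoid) (f : nat -> M) (w : word) : M :=
  foldr (fun a acc => mop (f a) acc) (munit M) w.

Definition msat (M : monoid) (u v : word) : Prop :=
  forall f : nat -> M, weval f u = weval f v.

Definition identities := word -> word -> Prop.

Definition in_var (S : identities) (M : monoid) : Prop :=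
  forall u v, S u v -> msat M u v.

Definition var_sat (S : identities) (u v : word) : Prop :=
  forall M : monoid, in_var S M -> msat M u v.

(* Letter encoding: x = 0, y = 1, t = 2, z_i = 3i+3, t_i = 3i+4, y_i = 3i+5. *)
Definition lx := 0. Definition ly := 1. Definition lt := 2.
Definition lz (i : nat) := 3 * i + 3.
Definition ltt (i : nat) := 3 * i + 4.
Definition lyy (i : nat) := 3 * i + 5.

(* i tau, for i in {1..N}, with tau a permutation of 'I_N representing
   a permutation of {1..N} (via the shift i <-> i-1). *)
Definition papp (N : nat) (tau : {perm 'I_N}) (i : nat) : nat :=
  if @insub nat (fun j => j < N) 'I_N i.-1 is Some j then (val (tau j)).+1 else 0.

Definition cword (n m k : nat) (tau : {perm 'I_(n + m + k)}) : word :=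
  let N := n + m + k in
  flatten [seq [:: lz i; ltt i] | i <- iota 1 n]
  ++ [:: lx; ly; lt]
  ++ flatten [seq [:: lz i; ltt i] | i <- iota n.+1 m]
  ++ [:: lx]
  ++ flatten [seq [:: lz (papp tau i); lyy i; lyy i] | i <- iota 1 N.-1]
  ++ [:: lz (papp tau N); ly]
  ++ flatten [seq [:: ltt i; lz i] | i <- iota (n + m).+1 k].

(* c' : the first occurrences of x and y swapped. *)
Definition cword' (n m k : nat) (tau : {perm 'I_(n + m + k)}) : word :=
  let N := n + m + k in
  flatten [seq [:: lz i; ltt i] | i <- iota 1 n]
  ++ [:: ly; lx; lt]
  ++ flatten [seq [:: lz i; ltt i] | i <- iota n.+1 m]
  ++ [:: lx]
  ++ flatten [seq [:: lz (papp tau i); lyy i; lyy i] | i <- iota 1 N.-1]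
  ++ [:: lz (papp tau N); ly]
  ++ flatten [seq [:: ltt i; lz i] | i <- iota (n + m).+1 k].

(* Phi_1 (we require n+m+k >= 1 so that z_{(n+m+k)tau} makes sense). *)
Definition Phi1 : identities := fun u v =>
  exists (n m k : nat) (tau : {perm 'I_(n + m + k)}), 0 < n + m + k /\
    ((u = cword tau /\ v = cword' tau) \/
     (u = rev (cword tau) /\ v = rev (cword' tau))).

Definition D15_ids : identities := fun u v =>
  Phi1 u v
  \/ (u = [:: lx; ly; lx] /\ v = [:: lx; lx; ly; lx])
  \/ (u = [:: lx; ly; lx] /\ v = [:: lx; ly; lx; lx])
  \/ (u = [:: lx; ly; lx; ly] /\ v = [:: ly; lx; ly; lx]).

From mathcomp Require Import all_boot all_fingroup zify.
Set Implicit Arguments. Unset Strict Implicit. Unset Printing Implicit Defensive.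

(* In D15 the identities xyx = xxyx = xyxx square any occurrence of a letter
   that occurs elsewhere in the word.  Hence both sides of the identity equal,
   in D15, the words p x U V x r and p x U x x V x r, where U and V are q1 and q2
   with every letter squared (x s x = x s x x absorbs the extra x).  Erasing the
   letters t, z_i, t_i, the identities c_{0,0,k} = c'_{0,0,k} of Phi1 become
   xyx D y = yxx D y for every product D of squares, and the reversed
   c_{0,0,1} = c'_{0,0,1} becomes yxyx = yxxy; together they give
   x aa D x = x aa x D x, and induction along U yields x U V x = x U x V x. *)

Definition stutter (T : Type) (s : seq T) : seq T := flatten [seq [:: a; a] | a <- s].

Lemma stutter_cat (T : Type) (s t : seq T) : stutter (s ++ t) = stutter s ++ stutter t.
Proof. by rewrite /stutter map_cat flatten_cat. Qed.

Lemma stutter_cons (T : Type) (a : T) (s : seq T) : stutter (a :: s) = a :: a :: stutter s.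
Proof. by []. Qed.

Lemma map_stutter (T U : Type) (f : T -> U) (s : seq T) :
  map f (stutter s) = stutter (map f s).
Proof. by elim: s => //= a s ->. Qed.

Section Evaluation.
Variable M : monoid.

Definition ev (s : seq M) : M := foldr (@mop M) (munit M) s.

Lemma ev_cat s t : ev (s ++ t) = mop (ev s) (ev t).
Proof. by elim: s => [|a s IH] /=; rewrite ?mop1l // IH mopA. Qed.

Lemma ev_seq1 a : ev [:: a] = a.
Proof. exact: mop1r. Qed.

Lemma weval_ev (f : nat -> M) w : weval f w = ev (map f w).
Proof. by elim: w => //= a w ->. Qed.

Lemma weval_cat (f : nat -> M) s t : weval f (s ++ t) = mop (weval f s) (weval f t).
Proof. by rewrite !weval_ev map_cat ev_cat. Qed.

Lemma ev_congr l s s' r : ev s = ev s' -> ev (l ++ s ++ r) = ev (l ++ s' ++ r).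
Proof. by rewrite !ev_cat => ->. Qed.

Lemma ev_collapse l B r : ev (l ++ ev B :: r) = ev (l ++ B ++ r).
Proof. by rewrite -cat1s !ev_cat ev_seq1. Qed.

(* Sends x, y to X, Y, each y_i (i >= 1) to the (i-1)-th item of us, and the
   remaining letters t, z_i, t_i to the unit. *)
Definition Phi1_assign (X Y : M) (us : seq M) (n : nat) : M :=
  if n == lx then X else if n == ly then Y
  else if (2 < n) && (n %% 3 == 2) then nth (munit M) us (n %/ 3).-2 else munit M.

Lemma Phi1_assign_lz X Y us i : Phi1_assign X Y us (lz i) = munit M.
Proof. by rewrite /Phi1_assign /lz /lx /ly; repeat case: ifP => ? //; lia. Qed.

Lemma Phi1_assign_ltt X Y us i : Phi1_assign X Y us (ltt i) = munit M.
Proof. by rewrite /Phi1_assign /ltt /lx /ly; repeat case: ifP => ? //; lia. Qed.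

Lemma Phi1_assign_lyy X Y us i : Phi1_assign X Y us (lyy i.+1) = nth (munit M) us i.
Proof.
rewrite /Phi1_assign /lyy /lx /ly; repeat case: ifP => ? //; try lia.
by congr nth; lia.
Qed.

Lemma weval_Phi1_assign_middle X Y us (h : nat -> nat) :
  weval (Phi1_assign X Y us)
    (flatten [seq [:: lz (h i); lyy i; lyy i] | i <- iota 1 (size us)]) = ev (stutter us).
Proof.
suff shift j n : weval (Phi1_assign X Y us)
    (flatten [seq [:: lz (h i); lyy i; lyy i] | i <- iota j.+1 n])
  = ev (stutter [seq nth (munit M) us i | i <- iota j n]).
  by rewrite shift -/(mkseq _ _) mkseq_nth.
elim: n j => [|n IH] j //=.
by rewrite -/(weval _ _) IH Phi1_assign_lz Phi1_assign_lyy mop1l.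
Qed.

Lemma weval_Phi1_assign_tail X Y us s :
  weval (Phi1_assign X Y us) (flatten [seq [:: ltt i; lz i] | i <- s]) = munit M.
Proof.
elim: s => //= i s IH.
by rewrite -/(weval _ _) IH Phi1_assign_ltt Phi1_assign_lz !mop1l.
Qed.

Hypothesis M_D15 : in_var D15_ids M.

Lemma ev_Phi1_swap X Y us :
  ev (X :: Y :: X :: stutter us ++ [:: Y]) = ev (Y :: X :: X :: stutter us ++ [:: Y]).
Proof.
have /M_D15/(_ (Phi1_assign X Y us)) :
    D15_ids (@cword 0 0 (size us).+1 1) (@cword' 0 0 (size us).+1 1).
  by left; exists 0, 0, (size us).+1, 1%g; split => //; left.
rewrite /cword /cword' !add0n !weval_cat weval_Phi1_assign_middle weval_Phi1_assign_tail /=.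
rewrite !Phi1_assign_lz Phi1_assign_ltt /Phi1_assign /= !mop1l !mop1r ev_cat ev_seq1.
by rewrite !mopA.
Qed.

Lemma ev_Phi1_rev X Y : ev [:: Y; X; Y; X] = ev [:: Y; X; X; Y].
Proof.
have /M_D15/(_ (Phi1_assign X Y [::])) :
    D15_ids (rev (@cword 0 0 1 1)) (rev (@cword' 0 0 1 1)).
  by left; exists 0, 0, 1, 1%g; split => //; right.
rewrite /cword /cword' /rev /= !Phi1_assign_lz Phi1_assign_ltt /Phi1_assign /=.
by rewrite !mop1l.
Qed.

Lemma ev_dup_left l a B r : ev (l ++ a :: B ++ a :: r) = ev (l ++ a :: a :: B ++ a :: r).
Proof.
have aBa : ev (a :: B ++ [:: a]) = ev (a :: a :: B ++ [:: a]).
  rewrite -(ev_collapse [:: a] B) -(ev_collapse [:: a; a] B).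
  have xyx : D15_ids [:: lx; ly; lx] [:: lx; lx; ly; lx] by right; left.
  exact: M_D15 xyx (Phi1_assign a (ev B) [::]).
by have := ev_congr l r aBa; rewrite /= -!catA.
Qed.

Lemma ev_dup_right l a B r : ev (l ++ a :: B ++ a :: r) = ev (l ++ a :: B ++ a :: a :: r).
Proof.
have aBa : ev (a :: B ++ [:: a]) = ev (a :: B ++ [:: a; a]).
  rewrite -(ev_collapse [:: a] B) -(ev_collapse [:: a] B [:: a; a]).
  have xyx : D15_ids [:: lx; ly; lx] [:: lx; ly; lx; lx] by right; right; left.
  exact: M_D15 xyx (Phi1_assign a (ev B) [::]).
by have := ev_congr l r aBa; rewrite /= -!catA.
Qed.

Lemma ev_split_square x a us r :
  ev (x :: a :: a :: stutter us ++ x :: r) = ev (x :: a :: a :: x :: stutter us ++ x :: r).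
Proof.
rewrite (ev_dup_left [::] x (a :: a :: stutter us) r).
have := ev_congr [:: x] r (ev_Phi1_swap a x us); rewrite /= -!catA /= => <-.
exact: (ev_congr [::] (stutter us ++ x :: r) (ev_Phi1_rev a x)).
Qed.

Lemma ev_split_stutter x us vs r :
  ev (x :: stutter us ++ stutter vs ++ x :: r)
  = ev (x :: stutter us ++ x :: stutter vs ++ x :: r).
Proof.
elim: us => [|a us IH]; first exact: (ev_dup_left [::]).
rewrite stutter_cons !cat_cons catA -stutter_cat ev_split_square stutter_cat -catA.
have := ev_congr [:: x; a; a] [::] IH; rewrite !cats0 => ->.
by rewrite -ev_split_square.
Qed.

Lemma ev_stutter_insert l x us vs r :
  ev (l ++ x :: stutter (us ++ vs) ++ x :: r)
  = ev (l ++ x :: stutter (us ++ x :: vs) ++ x :: r).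
Proof.
rewrite !(ev_cat l) !stutter_cat stutter_cons -!catA ev_split_stutter.
by rewrite (ev_dup_right [::]).
Qed.

End Evaluation.

Section Squaring.
Variables (M : monoid) (f : nat -> M).
Hypothesis M_D15 : in_var D15_ids M.

Lemma weval_square_letter (L R : word) a :
  a \in L ++ R -> weval f (L ++ a :: R) = weval f (L ++ a :: a :: R).
Proof.
rewrite !weval_ev mem_cat => /orP[] /splitPr[L1 L2].
  by rewrite -!catA !(map_cat, map_cons) (ev_dup_right M_D15).
by rewrite !(map_cat, map_cons) (ev_dup_left M_D15).
Qed.

Lemma weval_stutter (L q R : word) :
  (forall a, a \in q -> 1 < count_mem a (L ++ q ++ R)) ->
  weval f (L ++ q ++ R) = weval f (L ++ stutter q ++ R).
Proof.
elim: q L => [//|a q IH] L twice.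
have a_out : a \in L ++ q ++ R.
  have := twice a (mem_head a q).
  by rewrite -has_pred1 has_count !count_cat /= eqxx; lia.
rewrite (weval_square_letter a_out) stutter_cons.
have := IH (L ++ [:: a; a]); rewrite -!catA /= => -> // b b_q.
by have := twice b (mem_behead (s := a :: q) b_q); rewrite !count_cat /= !count_cat; lia.
Qed.

End Squaring.

Theorem lemma6p3 (p q1 q2 r : word) (x : nat) :
  (forall a, a \in q1 ++ q2 ->
     1 < count_mem a (p ++ x :: q1 ++ q2 ++ x :: r)) ->
  var_sat D15_ids (p ++ x :: q1 ++ q2 ++ x :: r)
                  (p ++ x :: q1 ++ x :: q2 ++ x :: r).
Proof.
move=> twice M M_D15 f.
have twice' a : a \in q1 ++ x :: q2 -> 1 < count_mem a (p ++ x :: q1 ++ x :: q2 ++ x :: r).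
  have: count_mem a (p ++ x :: q1 ++ q2 ++ x :: r)
          <= count_mem a (p ++ x :: q1 ++ x :: q2 ++ x :: r).
    by do ?rewrite count_cat /=; lia.
  case: (eqVneq a x) => [-> _ _ | a_x le]; first by do ?rewrite count_cat /=; rewrite eqxx; lia.
  rewrite mem_cat inE (negbTE a_x) -mem_cat => a_q.
  exact: leq_trans (twice a a_q) le.
have := @weval_stutter M f M_D15 (p ++ [:: x]) (q1 ++ q2) (x :: r).
rewrite -!catA => -> //.
have := @weval_stutter M f M_D15 (p ++ [:: x]) (q1 ++ x :: q2) (x :: r).
rewrite -!catA => -> //.
by rewrite !weval_ev !(map_cat, map_cons, map_stutter) (ev_stutter_insert M_D15).
Qed.
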